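(* Let $p=a/b$ with $a,b$ positive coprime integers and $b\not\equiv 0\pmod 4$. Set $k'=b$ if $b$ is even and $k'=2b$ if $b$ is odd. Let $(\Delta_L^{(m)})_{m\ge 1}$ be any real sequence satisfying $\Delta_L^{(m+1)}=\Delta_L^{(m)}+1+2p-2\lceil\Delta_L^{(m)}\rceil$ for all $m\ge1$ (with arbitrary real initial value $\Delta_L^{(1)}$). Then $\Delta_L^{(m+k')}=\Delta_L^{(m)}$ for all $m\ge 1$; equivalently, $$k'p+\sum_{l=0}^{k'-1}(-1)^l\lceil \Delta_L^{(m)}+2lp\rceil=0\quad\text{for all } m\ge1 .$$
   Context: $\lceil\cdot\rceil$ denotes the ceiling function. The recursion for $\Delta_L$ is the ''leading-order'' approximation of the extremum-to-extremum evolution of the dynamical system $p(i+1)=p(i)-\operatorname{sgn}x(i)$, $x(i+1)=x(i)+p(i)-\operatorname{sgn}x(i)$. *)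

From Stdlib Require Import Reals ZArith Znumtheory.
Open Scope R_scope.

(* Ceiling function: ceil x is the least integer n with x <= n.
   Stdlib's [up y] is the unique integer n with y < n <= y + 1,
   so ceil x = 1 - up (-x). *)
Definition Rceil (x : R) : Z := (1 - up (- x))%Z.

Definition kprime (b : nat) : nat := if Nat.even b then b else (2 * b)%nat.

From Stdlib Require Import Reals ZArith Lra Lia.
Open Scope R_scope.

(* Write h = k'/2, which is odd because 4 does not divide b, and c = 1 + 2p.
   Since h c is an integer, D (m + h) - D m is an integer z for every m.
   An integer shift commutes with the ceiling, so the recursion turns
   D (m + h) = D m + z into D (m + 1 + h) = D (m + 1) - z: the h-step
   difference only changes sign along the orbit. After an odd number h of
   steps it is -z, whence D (m + 2h) = D (m + h) - z = D m. *)

Lemma Rceil_add_IZR (x : R) (z : Z) : Rceil (x + IZR z) = (Rceil x + z)%Z.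
Proof.
  unfold Rceil.
  assert (Hup : up (- (x + IZR z)) = (up (- x) - z)%Z).
  { symmetry. apply tech_up; destruct (archimed (- x)) as [H1 H2];
      rewrite minus_IZR; lra. }
  rewrite Hup. lia.
Qed.

Section CeilRecursion.

Variable c : R.
Variable D : nat -> R.
Hypothesis D_rec : forall m : nat, (1 <= m)%nat ->
  D (S m) = D m + c - 2 * IZR (Rceil (D m)).

Lemma D_add_mod_int (m j : nat) : (1 <= m)%nat ->
  exists z : Z, D (m + j)%nat = D m + INR j * c + IZR z.
Proof.
  intros Hm. induction j as [|j [z Hz]].
  - exists 0%Z. rewrite Nat.add_0_r. simpl. lra.
  - exists (z - 2 * Rceil (D (m + j)%nat))%Z.
    rewrite Nat.add_succ_r, D_rec by lia.
    rewrite S_INR, minus_IZR, mult_IZR, Hz at 1. simpl (IZR 2). lra.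
Qed.

Lemma int_shift_flips (h m : nat) (z : Z) : (1 <= m)%nat ->
  D (m + h)%nat = D m + IZR z -> D (S m + h)%nat = D (S m) - IZR z.
Proof.
  intros Hm Hz.
  replace (S m + h)%nat with (S (m + h)) by lia.
  rewrite (D_rec (m + h)) by lia. rewrite (D_rec m) by lia.
  rewrite Hz, Rceil_add_IZR, plus_IZR. lra.
Qed.

Lemma int_shift_even (h m i : nat) (z : Z) : (1 <= m)%nat ->
  D (m + h)%nat = D m + IZR z -> D (m + 2 * i + h)%nat = D (m + 2 * i)%nat + IZR z.
Proof.
  intros Hm Hz. induction i as [|i IH].
  - rewrite Nat.mul_0_r, Nat.add_0_r. exact Hz.
  - replace (m + 2 * S i)%nat with (S (S (m + 2 * i))) by lia.
    apply int_shift_flips in IH; [|lia].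
    unfold Rminus in IH. rewrite <- opp_IZR in IH. apply int_shift_flips in IH; [|lia].
    rewrite opp_IZR in IH. lra.
Qed.

Lemma D_periodic_of_odd_shift (h m : nat) (N : Z) :
  Nat.Odd h -> INR h * c = IZR N -> (1 <= m)%nat -> D (m + 2 * h)%nat = D m.
Proof.
  intros [q Hq] HN Hm.
  destruct (D_add_mod_int m h Hm) as [z Hz].
  rewrite HN, Rplus_assoc, <- plus_IZR in Hz.
  pose proof (int_shift_even h m q _ Hm Hz) as Heven.
  apply int_shift_flips in Heven; [|lia].
  replace (m + 2 * h)%nat with (S (m + 2 * q) + h)%nat by lia.
  rewrite Heven. replace (S (m + 2 * q)) with (m + h)%nat by lia.
  rewrite Hz. lra.
Qed.

End CeilRecursion.

Lemma kprime_multiple (b : nat) : Nat.divide b (kprime b).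
Proof.
  unfold kprime. destruct (Nat.even b).
  - apply Nat.divide_refl.
  - exists 2%nat. lia.
Qed.

Lemma kprime_half_odd (b : nat) : (0 < b)%nat -> (b mod 4 <> 0)%nat ->
  exists h : nat, kprime b = (2 * h)%nat /\ Nat.Odd h.
Proof.
  intros hb hb4. unfold kprime. destruct (Nat.even b) eqn:Hev.
  - apply Nat.even_spec in Hev as [h ->]. exists h. split; [reflexivity|].
    destruct (Nat.Even_or_Odd h) as [[r ->]|Hodd]; [|exact Hodd].
    exfalso. apply hb4. replace (2 * (2 * r))%nat with (r * 4)%nat by lia.
    apply Nat.Div0.mod_mul.
  - exists b. split; [reflexivity|].
    apply Nat.odd_spec. rewrite <- Nat.negb_even, Hev. reflexivity.
Qed.

Theorem lemma1 (a b : nat) (D : nat -> R)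
  (ha : (0 < a)%nat) (hb : (0 < b)%nat)
  (hcop : Nat.gcd a b = 1%nat)
  (hb4 : (b mod 4 <> 0)%nat)
  (hrec : forall m : nat, (1 <= m)%nat ->
     D (S m) = D m + 1 + 2 * (INR a / INR b) - 2 * IZR (Rceil (D m))) :
  forall m : nat, (1 <= m)%nat -> D (m + kprime b)%nat = D m.
Proof.
  intros m Hm.
  destruct (kprime_half_odd b hb hb4) as [h [Hk Hodd]].
  destruct (kprime_multiple b) as [d Hd].
  set (c := 1 + 2 * (INR a / INR b)).
  assert (Hc : INR h * c = IZR (Z.of_nat (h + d * a))).
  { rewrite <- INR_IZR_INZ, plus_INR, mult_INR.
    assert (H2h : 2 * INR h = INR d * INR b)
      by (rewrite <- mult_INR, <- Hd, Hk, mult_INR; reflexivity).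
    assert (Hb0 : INR b <> 0) by (apply not_0_INR; lia).
    unfold c. field_simplify; [|exact Hb0].
    rewrite H2h. field. exact Hb0. }
  rewrite Hk.
  apply (D_periodic_of_odd_shift c D) with (N := Z.of_nat (h + d * a)); auto.
  intros n Hn. rewrite hrec by exact Hn. unfold c. ring.
Qed.
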